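(* Let $\Delta$ be a simplicial polytopal fan in $\mathbb{R}^d$ with ray generators $\mathbf{v}_1,\ldots,\mathbf{v}_n$, and let $\{(\mathbf{u}^{(i)},y^{(i)})\}_{i=1}^m\subset\mathbb{R}^d\times\mathbb{R}$ be noiseless data, i.e. there is a polytope $P\in\mathcal{P}(\Delta)$ with $y^{(i)}=h_P(\mathbf{u}^{(i)})$ for all $i$. With $U=(\mathbf{u}^{(1)},\ldots,\mathbf{u}^{(m)})^\mathsf{T}$ and $\mathbf{y}=(y^{(i)})_i$, \[ \hat{P}^\Delta(U,\mathbf{y})=\{\mathbf{h}\in\mathcal{P}(\Delta)\colon A_U\mathbf{h}=\mathbf{y}\}. \]
   Context: A fan is simplicial if every cone is generated by linearly independent vectors; polytopal if it is the normal fan of a polytope. $h_P(\mathbf{u})=\max_{\mathbf{x}\in P}\langle\mathbf{x},\mathbf{u}\rangle$. For $\mathbf{h}\in\mathbb{R}^n$, $P(\mathbf{h})=\{\mathbf{x}\colon\langle\mathbf{x},\mathbf{v}_i\rangle\le h_i\ \forall i\}$. The deformation cone $\mathcal{P}(\Delta)$ is the set of polytopes whose normal fan is coarsened by $\Delta$, identified via support vectors $\mathbf{h}=(h_P(\mathbf{v}_i))_i$ with a closed polyhedral cone in $\mathbb{R}^n$. For $\mathbf{u}\in\mathbb{R}^d$, with $\sigma$ the cone of $\Delta$ containing $\mathbf{u}$ in its relative interior and $\mathbf{u}=\sum_{k\in I_\sigma}\lambda_k\mathbf{v}_k$ over the generators of $\sigma$, set $[\mathbf{u}]_i=\lambda_i$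 for $i\in I_\sigma$ and $0$ otherwise. $A_U$ is the $m\times n$ matrix with rows $[\mathbf{u}^{(i)}]^\mathsf{T}$. The least-squares estimator $\hat{P}^\Delta(U,\mathbf{y})$ is the set of support vectors of polytopes $P\in\mathcal{P}(\Delta)$ minimizing $\frac1m\sum_i(h_P(\mathbf{u}^{(i)})-y^{(i)})^2$. *)

From HB Require Import structures.
From mathcomp Require Import all_boot all_order all_algebra.
From mathcomp Require Import boolp classical_sets reals.
From Stdlib Require Import ClassicalEpsilon.

Set Implicit Arguments.
Unset Strict Implicit.
Unset Printing Implicit Defensive.

Import Order.TTheory GRing.Theory Num.Theory.
Local Open Scope ring_scope.
Local Open Scope classical_set_scope.

Section Defs.
Variable R : realType.

Definition dotp d (x u : 'rV[R]_d) : R := \sum_(j < d) x 0 j * u 0 j.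

Definition conv d k (V : 'I_k.+1 -> 'rV[R]_d) : set 'rV[R]_d :=
  [set x | exists mu : 'I_k.+1 -> R,
     (forall j, 0 <= mu j) /\ \sum_j mu j = 1 /\ x = \sum_j mu j *: V j].

Definition polytope d (P : set 'rV[R]_d) : Prop :=
  exists k (V : 'I_k.+1 -> 'rV[R]_d), P = conv V.

Definition hP d (P : set 'rV[R]_d) (u : 'rV[R]_d) : R :=
  sup [set dotp x u | x in P].

Definition argmaxP d (P : set 'rV[R]_d) (u : 'rV[R]_d) : set 'rV[R]_d :=
  [set x | P x /\ forall z, P z -> dotp z u <= dotp x u].

Definition face d (P : set 'rV[R]_d) (F : set 'rV[R]_d) : Prop :=
  exists u, F = argmaxP P u.

Definition normal_cone d (P F : set 'rV[R]_d) : set 'rV[R]_d :=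
  [set u | F `<=` argmaxP P u].

Definition normal_fan d (P : set 'rV[R]_d) : set (set 'rV[R]_d) :=
  [set N | exists F, face P F /\ N = normal_cone P F].

Definition gcone d n (v : 'I_n -> 'rV[R]_d) (S : {set 'I_n}) : set 'rV[R]_d :=
  [set x | exists lam : 'I_n -> R,
     (forall k, k \in S -> 0 <= lam k) /\ x = \sum_(k in S) lam k *: v k].

Definition fan_cones d n (Delta : {set {set 'I_n}}) (v : 'I_n -> 'rV[R]_d)
  : set (set 'rV[R]_d) :=
  [set C | exists2 S, S \in Delta & C = gcone v S].

(* Delta (given by index sets of its cones) is a simplicial fan in R^d with
   ray generators v_1..v_n. *)
Definition simplicial_fan d n (Delta : {set {set 'I_n}}) (v : 'I_n -> 'rV[R]_d)
  : Prop :=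
  (forall S, S \in Delta -> forall lam : 'I_n -> R,
      \sum_(k in S) lam k *: v k = 0 -> forall k, k \in S -> lam k = 0) /\
  (* closed under faces (faces of a simplicial cone = subsets of generators) *)
  (forall S T : {set 'I_n}, S \in Delta -> T \subset S -> T \in Delta) /\
  (forall S T : {set 'I_n}, S \in Delta -> T \in Delta ->
      gcone v S `&` gcone v T = gcone v (S :&: T)) /\
  (forall k : 'I_n, [set k]%SET \in Delta).

Definition polytopal d n (Delta : {set {set 'I_n}}) (v : 'I_n -> 'rV[R]_d)
  : Prop :=
  exists P, polytope P /\ normal_fan P = fan_cones Delta v.

Definition coarsened_by d n (Delta : {set {set 'I_n}}) (v : 'I_n -> 'rV[R]_d)
  (P : set 'rV[R]_d) : Prop :=
  forall S, S \in Delta -> exists2 N, normal_fan P N & gcone v S `<=` N.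

Definition in_defP d n (Delta : {set {set 'I_n}}) (v : 'I_n -> 'rV[R]_d)
  (P : set 'rV[R]_d) : Prop :=
  polytope P /\ coarsened_by Delta v P.

Definition supvec d n (v : 'I_n -> 'rV[R]_d) (P : set 'rV[R]_d) : 'cV[R]_n :=
  \col_k hP P (v k).

(* Deformation cone, as a subset of R^n via support vectors. *)
Definition def_cone d n (Delta : {set {set 'I_n}}) (v : 'I_n -> 'rV[R]_d)
  : set 'cV[R]_n :=
  [set h | exists P, in_defP Delta v P /\ h = supvec v P].

(* lam are the coordinates [u] of u: u = sum_{k in I_sigma} lam_k v_k with
   sigma in Delta, u in relint sigma (all lam_k > 0 on I_sigma), 0 elsewhere. *)
Definition is_fan_coord d n (Delta : {set {set 'I_n}}) (v : 'I_n -> 'rV[R]_d)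
  (u : 'rV[R]_d) (lam : 'I_n -> R) : Prop :=
  exists2 S, S \in Delta &
    (forall k, k \in S -> 0 < lam k) /\ (forall k, k \notin S -> lam k = 0) /\
    u = \sum_(k in S) lam k *: v k.

Definition fan_coord d n (Delta : {set {set 'I_n}}) (v : 'I_n -> 'rV[R]_d)
  (u : 'rV[R]_d) : 'I_n -> R :=
  epsilon (inhabits (fun _ => 0)) (is_fan_coord Delta v u).

Definition A_U d n m (Delta : {set {set 'I_n}}) (v : 'I_n -> 'rV[R]_d)
  (U : 'M[R]_(m, d)) : 'M[R]_(m, n) :=
  \matrix_(i, k) fan_coord Delta v (row i U) k.

Definition lsq_loss d m (U : 'M[R]_(m, d)) (y : 'cV[R]_m) (P : set 'rV[R]_d)
  : R :=
  m%:R^-1 * \sum_(i < m) (hP P (row i U) - y i 0) ^+ 2.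

Definition lse d n m (Delta : {set {set 'I_n}}) (v : 'I_n -> 'rV[R]_d)
  (U : 'M[R]_(m, d)) (y : 'cV[R]_m) : set 'cV[R]_n :=
  [set h | exists P, in_defP Delta v P /\ h = supvec v P /\
     forall Q, in_defP Delta v Q -> lsq_loss U y P <= lsq_loss U y Q].

End Defs.

From HB Require Import structures.
From mathcomp Require Import all_boot all_order all_algebra.
From mathcomp Require Import boolp classical_sets reals.
From Stdlib Require Import ClassicalEpsilon.

Set Implicit Arguments.
Unset Strict Implicit.
Unset Printing Implicit Defensive.

Import Order.TTheory GRing.Theory Num.Theory.
Local Open Scope ring_scope.
Local Open Scope classical_set_scope.

(** If the normal fan of P is coarsened by Delta, a single point of P maximizes
    <., w> simultaneously for all w in a cone of Delta, so h_P is linear on each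
    cone and h_P(u) = <[u], h> for the support vector h of P.  Hence the loss of
    P is |A_U h - y|^2 / m; with noiseless data its minimum over P(Delta) is 0,
    and the minimizers are exactly the h in P(Delta) with A_U h = y. *)

Section SupportFunction.
Variables (R : realType) (d : nat).
Implicit Types (P : set 'rV[R]_d) (u x : 'rV[R]_d).

Lemma dotp_suml (I : finType) (F : pred I) (c : I -> R) (X : I -> 'rV[R]_d) u :
  dotp (\sum_(j | F j) c j *: X j) u = \sum_(j | F j) c j * dotp (X j) u.
Proof.
rewrite /dotp; under eq_bigr => t _ do rewrite summxE big_distrl /=.
rewrite exchange_big /=; apply: eq_bigr => j _.
by rewrite big_distrr /=; apply: eq_bigr => t _; rewrite mxE mulrA.
Qed.

Lemma dotp_sumr (I : finType) (F : pred I) (c : I -> R) (X : I -> 'rV[R]_d) x :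
  dotp x (\sum_(j | F j) c j *: X j) = \sum_(j | F j) c j * dotp x (X j).
Proof.
rewrite /dotp; under eq_bigr => t _ do rewrite summxE big_distrr /=.
rewrite exchange_big /=; apply: eq_bigr => j _.
by rewrite big_distrr /=; apply: eq_bigr => t _; rewrite mxE mulrCA.
Qed.

Lemma hP_argmax P u x : argmaxP P u x -> hP P u = dotp x u.
Proof.
move=> [Px xmax]; apply/eqP; rewrite eq_le; apply/andP; split.
- apply: ge_sup; first by exists (dotp x u), x.
  by move=> _ [z Pz <-]; exact: xmax.
- apply: sup_upper_bound; last by exists x.
  split; first by exists (dotp x u), x.
  by exists (dotp x u) => _ [z Pz <-]; exact: xmax.
Qed.

Lemma polytope_argmax P u : polytope P -> exists x, argmaxP P u x.
Proof.
move=> [k [V ->]].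
pose j0 := [arg max_(j > ord0) dotp (V j) u]%O.
have j0max j : dotp (V j) u <= dotp (V j0) u.
  by rewrite /j0; case: arg_maxP => // i _; apply.
exists (V j0); split.
- exists (fun j => (j == j0)%:R); split; first by move=> j; rewrite ler0n.
  split; first by rewrite (bigD1 j0) //= eqxx big1 ?addr0 // => j /negPf ->.
  rewrite (bigD1 j0) //= eqxx scale1r big1 ?addr0 // => j /negPf ->.
  by rewrite scale0r.
- move=> _ [mu [mu_ge0 [mu_sum1 ->]]]; rewrite dotp_suml.
  apply: le_trans (_ : \sum_j mu j * dotp (V j0) u <= _).
    by apply: ler_sum => j _; apply: ler_wpM2l => //; exact: j0max.
  by rewrite -big_distrl /= mu_sum1 mul1r.
Qed.

End SupportFunction.

Section FanCoordinates.
Variables (R : realType) (d n : nat).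
Variables (Delta : {set {set 'I_n}}) (v : 'I_n -> 'rV[R]_d).

Lemma gcone_generator (S : {set 'I_n}) k : k \in S -> gcone v S (v k).
Proof.
move=> kS; exists (fun j => (j == k)%:R); split => [j _|]; first by rewrite ler0n.
rewrite (bigD1 k) //= eqxx scale1r big1 ?addr0 // => j /andP[_ /negPf ->].
by rewrite scale0r.
Qed.

Lemma hP_fan_coord P u lam : in_defP Delta v P -> is_fan_coord Delta v u lam ->
  hP P u = \sum_k lam k * hP P (v k).
Proof.
move=> [polP coarse] [S SD [lam_gt0 [lam0 ->]]].
have [_ [F [[w ->] ->]] S_normal] := coarse S SD.
have [x xmax] := polytope_argmax w polP.
have u_cone : gcone v S (\sum_(k in S) lam k *: v k).
  by exists lam; split => // k kS; exact: ltW (lam_gt0 k kS).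
rewrite (hP_argmax (S_normal _ u_cone x xmax)) dotp_sumr.
rewrite [RHS](bigID (mem S)) /= [X in _ + X]big1 ?addr0 => [|k kS]; last first.
  by rewrite lam0 // mul0r.
apply: eq_bigr => k kS.
by rewrite (hP_argmax (S_normal _ (gcone_generator kS) x xmax)).
Qed.

Lemma polytopal_complete u : polytopal Delta v ->
  exists2 S, S \in Delta & gcone v S u.
Proof.
move=> [P [_ fanP]].
have : fan_cones Delta v (normal_cone P (argmaxP P u)).
  by rewrite -fanP; exists (argmaxP P u); split => //; exists u.
by case=> S SD coneS; exists S; rewrite // -coneS.
Qed.

Lemma fan_coordP u :
  (forall S T : {set 'I_n}, S \in Delta -> T \subset S -> T \in Delta) ->
  (exists2 S, S \in Delta & gcone v S u) ->
  is_fan_coord Delta v u (fan_coord Delta v u).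
Proof.
move=> face_closed [S SD [lam [lam_ge0 ->]]]; apply: epsilon_spec.
(* Dropping the zero coefficients puts u in the relative interior of a face. *)
pose S' := [set k in S | 0 < lam k].
exists (fun k => if k \in S' then lam k else 0), S'.
  by apply: face_closed SD _; apply/fintype.subsetP => k; rewrite inE => /andP[].
split; first by move=> k kS'; rewrite kS'; move: kS'; rewrite inE => /andP[].
split; first by move=> k /negPf ->.
rewrite (bigID (fun k => 0 < lam k)) /= [X in _ + X]big1 ?addr0.
  by apply: eq_big => [k|k lam_gt0]; rewrite inE // lam_gt0.
move=> k /andP[kS]; rewrite -leNgt => lam_le0.
by rewrite (@le_anti _ _ (lam k) 0) ?lam_le0 ?lam_ge0 // scale0r.
Qed.

Lemma A_U_supvec m (U : 'M[R]_(m, d)) P :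
  simplicial_fan Delta v -> polytopal Delta v -> in_defP Delta v P ->
  A_U Delta v U *m supvec v P = \col_i hP P (row i U).
Proof.
move=> [_ [face_closed _]] polytopal_fan defP; apply/matrixP => i j.
rewrite !mxE (hP_fan_coord defP (fan_coordP face_closed
  (polytopal_complete (row i U) polytopal_fan))).
by apply: eq_bigr => k _; rewrite !mxE.
Qed.

End FanCoordinates.

Section LeastSquares.
Variables (R : realType) (d m : nat) (U : 'M[R]_(m, d)) (y : 'cV[R]_m).

Lemma lsq_loss_ge0 P : 0 <= lsq_loss U y P.
Proof.
by apply: mulr_ge0; [rewrite invr_ge0 ler0n | apply: sumr_ge0 => i _; exact: sqr_ge0].
Qed.

Lemma lsq_loss_eq0 P : lsq_loss U y P = 0 <-> \col_i hP P (row i U) = y.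
Proof.
split=> [loss0 | fit]; last first.
  rewrite /lsq_loss big1 ?mulr0 // => i _.
  by rewrite -fit mxE subrr expr0n.
apply/matrixP => i j; rewrite (ord1 j) mxE; apply/eqP; rewrite -subr_eq0 -sqrf_eq0.
have m_inv_neq0 : m%:R^-1 != 0 :> R.
  by rewrite invr_eq0 pnatr_eq0 -lt0n (leq_ltn_trans (leq0n i) (ltn_ord i)).
move: loss0 => /eqP; rewrite /lsq_loss mulf_eq0 (negPf m_inv_neq0) /=.
by move=> /eqP /psumr_eq0P -> // k _; exact: sqr_ge0.
Qed.

End LeastSquares.

Theorem corollary3p2 (R : realType) (d n m : nat)
  (Delta : {set {set 'I_n}}) (v : 'I_n -> 'rV[R]_d)
  (U : 'M[R]_(m, d)) (y : 'cV[R]_m) :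
  simplicial_fan Delta v -> polytopal Delta v ->
  (exists P, in_defP Delta v P /\ forall i, y i 0 = hP P (row i U)) ->
  lse Delta v U y = [set h | def_cone Delta v h /\ A_U Delta v U *m h = y].
Proof.
move=> simplicial polytopal_fan [P0 [defP0 P0_fit]].
have loss0 Q : in_defP Delta v Q ->
    lsq_loss U y Q = 0 <-> A_U Delta v U *m supvec v Q = y.
  by move=> defQ; rewrite A_U_supvec // lsq_loss_eq0.
have loss_P0 : lsq_loss U y P0 = 0.
  by apply/lsq_loss_eq0/matrixP => i j; rewrite (ord1 j) mxE P0_fit.
apply/seteqP; split.
- move=> _ [Q [defQ [-> Q_min]]]; split; first by exists Q.
  apply/loss0 => //; apply/eqP; rewrite eq_le lsq_loss_ge0 andbT -loss_P0.
  exact: Q_min.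
- move=> _ [[Q [defQ ->]] fitQ]; exists Q; do 2!split=> //.
  by move=> Q' _; rewrite (proj2 (loss0 Q defQ) fitQ); exact: lsq_loss_ge0.
Qed.
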